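(* There exist smooth nonnegative functions $\rho,\phi$ on $[0,\infty)$, positive on $(0,\infty)$, such that $\rho(0)=1$, all odd-order derivatives of $\rho$ vanish at $0$, $\phi(0)=0$, $\phi'(0)=4$, all even-order derivatives of $\rho\phi$ vanish at $0$, $\rho'\equiv e^{-100}$ on $[2,\infty)$, $\phi\equiv1$ on $[2,\infty)$, and the metric $g_{\rho,\phi}=dr^2+\rho^2(r)\left[\phi^2(r)(\sigma^1)^2+(\sigma^2)^2+(\sigma^3)^2\right]$ on $(0,\infty)\times\mathbb{S}^3$ satisfies $\mathrm{Ric}_{g_{\rho,\phi}}\geq0$.
   Context: Identify $\mathbb{S}^3$ with $SU(2)$ via $(z,w)\mapsto\begin{pmatrix} z&-\bar w\\ w&\bar z\end{pmatrix}$. Let $X_1,X_2,X_3$ be the left-invariant vector fields on $SU(2)$ generated by $\begin{pmatrix}\sqrt{-1}&0\\0&-\sqrt{-1}\end{pmatrix}$, $\begin{pmatrix}0&1\\-1&0\end{pmatrix}$, $\begin{pmatrix}0&\sqrt{-1}\\ \sqrt{-1}&0\end{pmatrix}$, and let $\sigma^1,\sigma^2,\sigma^3$ be the dual left-invariant $1$-forms. Under the stated boundary conditions at $r=0$, $g_{\rho,\phi}$ extends to a smooth metric on the total space of a rank-2 real vector bundle over $S^2$ of Euler number $\pm4$ (and descends to the normal bundle of the standard embedding $\mathbb{R}P^2\subset\mathbb{R}^4$). *)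

From HB Require Import structures.
From mathcomp Require Import all_boot all_order all_algebra.
From mathcomp Require Import all_classical all_reals all_analysis.
Set Implicit Arguments. Unset Strict Implicit. Unset Printing Implicit Defensive.
Import Order.TTheory GRing.Theory Num.Theory.
Local Open Scope ring_scope.

Section Defs.
Variable R : realType.

(* f : R -> R is smooth (C^infinity): every iterated derivative is differentiable.
   A function on [0,oo) is smooth iff it is the restriction of such a function. *)
Definition smooth (f : R -> R) : Prop :=
  forall (n : nat) (x : R), derivable (derive1n n f) x 1.

(* Global frame on (0,oo) x SU(2):  F_0 = d/dr,  F_i = X_i (i = 1,2,3),
   the left-invariant fields generated by
   X1 = [[i,0],[0,-i]], X2 = [[0,1],[-1,0]], X3 = [[0,i],[i,0]].
   Lie brackets: [F_a, F_b] = sum_c frameC a b c F_c, with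
   [X1,X2] = 2 X3, [X2,X3] = 2 X1, [X3,X1] = 2 X2, [d/dr, X_i] = 0. *)
Definition frameC (a b c : 'I_4) : R :=
  match nat_of_ord a, nat_of_ord b, nat_of_ord c with
  | 1, 2, 3 => 2 | 2, 1, 3 => -2
  | 2, 3, 1 => 2 | 3, 2, 1 => -2
  | 3, 1, 2 => 2 | 1, 3, 2 => -2
  | _, _, _ => 0
  end.

(* Derivative of a function depending only on r along the frame field F_a:
   d/dr differentiates it, the X_i (tangent to the S^3 factor) kill it. *)
Definition frameD (a : 'I_4) (f : R -> R) : R -> R :=
  if nat_of_ord a == 0%N then derive1 f else fun _ => 0.

(* A metric whose frame components G r a b = g(F_a, F_b) depend only on r. *)
Section LeviCivita.
Variable G : R -> 'M[R]_4.

(* Koszul formula: K a b c = g(nabla_{F_a} F_b, F_c). *)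
Definition koszul (a b c : 'I_4) (r : R) : R :=
  (frameD a (fun s => G s b c) r + frameD b (fun s => G s a c) r
   - frameD c (fun s => G s a b) r
   + \sum_(e < 4) frameC a b e * G r e c
   - \sum_(e < 4) frameC a c e * G r e b
   - \sum_(e < 4) frameC b c e * G r e a) / 2.

(* Christoffel symbols: nabla_{F_a} F_b = sum_d christoffel a b d F_d. *)
Definition christoffel (a b d : 'I_4) (r : R) : R :=
  \sum_(c < 4) invmx (G r) d c * koszul a b c r.

(* Riemann tensor: R(F_a,F_b)F_c = sum_e riemann a b c e F_e, where
   R(X,Y)Z = nabla_X nabla_Y Z - nabla_Y nabla_X Z - nabla_[X,Y] Z. *)
Definition riemann (a b c e : 'I_4) (r : R) : R :=
  frameD a (christoffel b c e) r - frameD b (christoffel a c e) r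
  + \sum_(d < 4) (christoffel b c d r * christoffel a d e r
                  - christoffel a c d r * christoffel b d e r)
  - \sum_(d < 4) frameC a b d * christoffel d c e r.

(* Ricci tensor: Ric(F_b, F_c) = trace (X |-> R(X, F_b) F_c). *)
Definition ricci (b c : 'I_4) (r : R) : R :=
  \sum_(a < 4) riemann a b c a r.
End LeviCivita.

(* The metric g_{rho,phi} = dr^2 + rho^2 [phi^2 (s1)^2 + (s2)^2 + (s3)^2]
   in the frame (d/dr, X1, X2, X3). *)
Definition g_rho_phi (rho phi : R -> R) (r : R) : 'M[R]_4 :=
  \matrix_(a < 4, b < 4)
    if a != b then 0
    else if nat_of_ord a == 0%N then 1
    else if nat_of_ord a == 1%N then (rho r * phi r) ^+ 2
    else rho r ^+ 2.

(* Ric >= 0 on (0,oo) x S^3: Ric(v,v) >= 0 for every tangent vector v,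
   written in the frame (components depend only on r). *)
Definition ricci_nonneg (G : R -> 'M[R]_4) : Prop :=
  forall (r : R), 0 < r -> forall v : 'I_4 -> R,
    0 <= \sum_(b < 4) \sum_(c < 4) ricci G b c r * v b * v c.

End Defs.

(* With [step] a smooth nondecreasing function, 0 on (-oo, 1/8] and 1 on
   [3/8, oo), with step x + step (1/2 - x) = 1 (built from x |-> exp (-1/x)),
   its primitive [ramp] vanishes up to 1/8 and equals x - 1/4 beyond 3/8.
   For eps = e^-100 put rho = 1 + eps ramp and rho phi = 4 r - (4 - eps) ramp.
   Near 0, rho = 1 and rho phi = 4 r, which gives the boundary conditions;
   beyond 3/8, rho phi = rho, so phi = 1 and rho' = eps.
   In the frame (d/dr, X1, X2, X3) the Ricci tensor of
   dr^2 + a^2 s1^2 + b^2 (s2^2 + s3^2) is diagonal, with entries depending on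
   a, b and their first two derivatives.  For a = rho phi and b = rho one has
   a' >= 0, 0 <= b' <= eps, a'' = -(4 - eps) step' <= 0 <= b'' = eps step',
   a <= b <= a + 1, and a >= 1/2, eps step' b <= 1/2 wherever step' != 0;
   this makes every entry nonnegative. *)

From mathcomp Require Import all_boot all_order all_algebra.
From mathcomp Require Import all_classical all_reals all_analysis.
From mathcomp Require Import ring lra.
Import Order.TTheory GRing.Theory Num.Theory numFieldNormedType.Exports.
Local Open Scope classical_set_scope.
Local Open Scope ring_scope.
Set Implicit Arguments. Unset Strict Implicit.

Section Derivatives.
Variable R : realType.
Implicit Types (f g : R -> R) (c x y : R).

Lemma is_derive1D f g x df dg : is_derive x 1 f df -> is_derive x 1 g dg ->
  is_derive x 1 (fun y => f y + g y) (df + dg).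
Proof. exact: is_deriveD. Qed.

Lemma is_derive1B f g x df dg : is_derive x 1 f df -> is_derive x 1 g dg ->
  is_derive x 1 (fun y => f y - g y) (df - dg).
Proof. exact: is_deriveB. Qed.

Lemma is_derive1_cstM (c : R) f x df : is_derive x 1 f df ->
  is_derive x 1 (fun y => c * f y) (c * df).
Proof.
by move=> fx; apply: is_derive_eq (is_deriveZ c fx) _; rewrite /GRing.scale.
Qed.

Lemma is_derive1M f g x df dg : is_derive x 1 f df -> is_derive x 1 g dg ->
  is_derive x 1 (fun y => f y * g y) (df * g x + f x * dg).
Proof.
move=> fx gx; apply: is_derive_eq (is_deriveM fx gx) _.
by rewrite /GRing.scale /=; ring.
Qed.

Lemma is_derive1V f x df : f x != 0 -> is_derive x 1 f df ->
  is_derive x 1 (fun y => (f y)^-1) (- df / f x ^+ 2).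
Proof.
move=> fx0 fx; apply: is_derive_eq (is_deriveV fx0 fx) _.
by rewrite /GRing.scale /=; field.
Qed.

Lemma is_derive1X f n x df : is_derive x 1 f df ->
  is_derive x 1 (fun y => f y ^+ n) (n%:R * f x ^+ n.-1 * df).
Proof.
move=> fx; elim: n => [|n IH]; first by rewrite !mul0r; exact: is_derive_cst.
have -> : (fun y => f y ^+ n.+1) = (fun y => f y * f y ^+ n).
  by apply/funext => y; rewrite exprS.
apply: is_derive_eq (is_derive1M fx IH) _.
case: n {IH} => [|n] /=; first by rewrite !expr0 !mulr1 mul0r mulr0 addr0 mul1r.
by rewrite !exprS -!natr1; ring.
Qed.

Lemma is_derive1_sqr f x df : is_derive x 1 f df ->
  is_derive x 1 (fun y => f y ^+ 2) (2 * f x * df).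
Proof. by move=> fx; apply: is_derive_eq (is_derive1X 2 fx) _; rewrite expr1. Qed.

Lemma is_derive1_subr_cst (c x : R) : is_derive x 1 (fun y => y - c) 1.
Proof.
by apply: is_derive_eq (is_deriveB (is_derive_id x 1) (is_derive_cst c x 1)) _;
  rewrite subr0.
Qed.

Lemma is_derive1_cst_subr (c x : R) : is_derive x 1 (fun y => c - y) (- 1).
Proof.
by apply: is_derive_eq (is_deriveB (is_derive_cst c x 1) (is_derive_id x 1)) _;
  rewrite sub0r.
Qed.

Lemma is_derive1_expR_comp f x df : is_derive x 1 f df ->
  is_derive x 1 (fun y => expR (f y)) (expR (f x) * df).
Proof. by move=> fx; exact: is_derive1_comp (is_derive_expR _) fx. Qed.

Lemma is_derive1_derive1 f x df : is_derive x 1 f df -> derive1 f x = df.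
Proof. by move=> fx; rewrite derive1E derive_val. Qed.

Lemma derivable1_is_derive f x : derivable f x 1 -> is_derive x 1 f (derive1 f x).
Proof. by move=> fx; rewrite derive1E; apply: DeriveDef. Qed.

Lemma ger0_is_derive_le f (f' : R -> R) x y :
  (forall z : R, is_derive z 1 f (f' z)) -> (forall z : R, 0 <= f' z) ->
  x <= y -> f x <= f y.
Proof.
move=> df f'_ge0 xy.
have fc : continuous f.
  by move=> z; apply/differentiable_continuous/derivable1_diffP; case: (df z).
have [c _ fxy] := MVT_segment xy (fun z _ => df z) (continuous_subspaceT fc).
by rewrite -subr_ge0 fxy mulr_ge0 // subr_ge0.
Qed.

Lemma derive1n_eq_lt f g c : (forall y, y < c -> f y = g y) ->
  forall n y, y < c -> derive1n n f y = derive1n n g y.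
Proof.
move=> fg n; elim: n => [|n IH] y yc; first by rewrite !derive1n0 fg.
rewrite !derive1nS !derive1E; apply: near_eq_derive.
by near=> z; apply: IH; near: z; exact: lt_nbhsl.
Unshelve. all: by end_near. Qed.

Lemma derive1n_cst n c : derive1n n.+1 (fun => c) = fun => 0.
Proof.
elim: n => [|n IH]; last by rewrite derive1nS IH; apply/funext => y; exact: derive1_cst.
by rewrite derive1n1; apply/funext => y; exact: derive1_cst.
Qed.

Lemma derive1_scale c : derive1 (fun y => c * y) = fun => c.
Proof.
apply/funext => y; apply: is_derive1_derive1.
by apply: is_derive_eq (is_derive1_cstM c (is_derive_id y 1)) _; rewrite mulr1.
Qed.

End Derivatives.

Section Smooth.
Variable R : realType.
Implicit Types (f g F : R -> R) (x : R) (n : nat).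

Fixpoint derivable_upto n f : Prop :=
  (forall x, derivable f x 1) /\
  (if n is m.+1 then derivable_upto m (derive1 f) else True).

Lemma smoothP f : smooth f <-> forall n, derivable_upto n f.
Proof.
split=> [fs n|fn n]; first elim: n f fs => [|n IH] f fs.
- by split; first exact: (fs 0%N).
- split; first exact: (fs 0%N).
  by apply: IH => m; rewrite -derive1Sn; exact: fs.
- elim: n f fn => [|n IH] f fn; first exact: (fn 0%N).1.
  by rewrite derive1Sn; apply: IH => m; exact: (fn m.+1).2.
Qed.

Lemma derivable_uptoW n f : derivable_upto n.+1 f -> derivable_upto n f.
Proof.
elim: n f => [|n IH] f [fd fn]; split; try exact: fd; first by [].
exact: IH.
Qed.

Lemma derivable_upto_is_derive n f F : (forall x, is_derive x 1 f (F x)) ->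
  derivable_upto n F -> derivable_upto n.+1 f.
Proof.
move=> df Fn; split; first by move=> x; case: (df x).
by rewrite (_ : derive1 f = F) //; apply/funext => x; exact: is_derive1_derive1.
Qed.

Lemma smooth_is_derive f F : (forall x, is_derive x 1 f (F x)) ->
  smooth F -> smooth f.
Proof.
move=> df /smoothP Fs; apply/smoothP => n.
exact/derivable_uptoW/(derivable_upto_is_derive df).
Qed.

Lemma derivable_upto_cst n (c : R) : derivable_upto n (fun => c).
Proof.
elim: n c => [|n IH] c; first by split; first by move=> x; exact: derivable_cst.
exact: derivable_upto_is_derive (fun x => is_derive_cst c x 1) (IH 0).
Qed.

Lemma derivable_upto_id n : derivable_upto n (fun x : R => x).
Proof.
case: n => [|n]; first by split; first by move=> x; exact: derivable_id.
exact: derivable_upto_is_derive (fun x => is_derive_id x 1) (derivable_upto_cst n 1).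
Qed.

Lemma derivable_uptoD n f g : derivable_upto n f -> derivable_upto n g ->
  derivable_upto n (fun x => f x + g x).
Proof.
elim: n f g => [|n IH] f g [fd fn] [gd gn].
  by split; first by move=> x; apply: derivableD; [exact: fd|exact: gd].
have df x : is_derive x 1 (fun x => f x + g x) (derive1 f x + derive1 g x).
  by apply: is_deriveD; exact: derivable1_is_derive.
exact: derivable_upto_is_derive df (IH _ _ fn gn).
Qed.

Lemma derivable_uptoN n f : derivable_upto n f -> derivable_upto n (fun x => - f x).
Proof.
elim: n f => [|n IH] f [fd fn].
  by split; first by move=> x; exact: derivableN.
have df x : is_derive x 1 (fun x => - f x) (- derive1 f x).
  by apply: is_deriveN; exact: derivable1_is_derive.
exact: derivable_upto_is_derive df (IH _ fn).
Qed.

Lemma derivable_uptoM n f g : derivable_upto n f -> derivable_upto n g ->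
  derivable_upto n (fun x => f x * g x).
Proof.
elim: n f g => [|n IH] f g [fd fn] [gd gn].
  by split; first by move=> x; apply: derivableM; [exact: fd|exact: gd].
have df x : is_derive x 1 (fun x => f x * g x) (derive1 f x * g x + f x * derive1 g x).
  by apply: is_derive1M; exact: derivable1_is_derive.
apply: (derivable_upto_is_derive df).
have fn' : derivable_upto n f by apply: derivable_uptoW; split.
have gn' : derivable_upto n g by apply: derivable_uptoW; split.
by apply: derivable_uptoD; apply: IH.
Qed.

Lemma derivable_uptoV n g : (forall x, g x != 0) -> derivable_upto n g ->
  derivable_upto n (fun x => (g x)^-1).
Proof.
move=> g0; elim: n g g0 => [|n IH] g g0 [gd gn].
  by split; first by move=> x; apply: derivableV; [exact: g0|exact: gd].
have dg x : is_derive x 1 (fun x => (g x)^-1)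
    (- derive1 g x * ((g x)^-1 * (g x)^-1)).
  apply: is_derive_eq (is_derive1V (g0 x) (derivable1_is_derive (gd x))) _.
  by rewrite -invrM ?unitfE ?g0 // expr2.
apply: (derivable_upto_is_derive dg).
have gn' : derivable_upto n g by apply: derivable_uptoW; split.
apply: derivable_uptoM; first exact: derivable_uptoN.
by apply: derivable_uptoM; apply: IH.
Qed.

Lemma derivable_upto_comp n f g : derivable_upto n f -> derivable_upto n g ->
  derivable_upto n (f \o g).
Proof.
elim: n f g => [|n IH] f g [fd fn] [gd gn].
  split; last by [].
  by move=> x; case: (is_derive1_comp (derivable1_is_derive (fd (g x)))
    (derivable1_is_derive (gd x))).
have dfg x : is_derive x 1 (f \o g) (derive1 f (g x) * derive1 g x).
  by apply: is_derive1_comp; exact: derivable1_is_derive.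
apply: (derivable_upto_is_derive dfg).
have gn' : derivable_upto n g by apply: derivable_uptoW; split.
by apply: derivable_uptoM => //; apply: IH.
Qed.

Lemma smooth_cst (c : R) : smooth (fun => c).
Proof. by apply/smoothP => n; exact: derivable_upto_cst. Qed.

Lemma smooth_id : smooth (fun x : R => x).
Proof. by apply/smoothP => n; exact: derivable_upto_id. Qed.

Lemma smoothD f g : smooth f -> smooth g -> smooth (fun x => f x + g x).
Proof.
by move=> /smoothP fs /smoothP gs; apply/smoothP => n; exact: derivable_uptoD.
Qed.

Lemma smoothN f : smooth f -> smooth (fun x => - f x).
Proof. by move=> /smoothP fs; apply/smoothP => n; exact: derivable_uptoN. Qed.

Lemma smoothM f g : smooth f -> smooth g -> smooth (fun x => f x * g x).
Proof.
by move=> /smoothP fs /smoothP gs; apply/smoothP => n; exact: derivable_uptoM.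
Qed.

Lemma smoothV g : (forall x, g x != 0) -> smooth g -> smooth (fun x => (g x)^-1).
Proof.
by move=> g0 /smoothP gs; apply/smoothP => n; exact: derivable_uptoV.
Qed.

Lemma smooth_comp f g : smooth f -> smooth g -> smooth (f \o g).
Proof.
by move=> /smoothP fs /smoothP gs; apply/smoothP => n; exact: derivable_upto_comp.
Qed.

End Smooth.

Section Flat.
Variable R : realType.
Implicit Types (x h : R) (k : nat).

Definition flat k x : R := if 0 < x then x^-1 ^+ k * expR (- x^-1) else 0.

Lemma flat_le0 k x : x <= 0 -> flat k x = 0.
Proof. by rewrite /flat leNgt => /negPf ->. Qed.

Lemma flat_gt0 k x : 0 < x -> 0 < flat k x.
Proof. by move=> x0; rewrite /flat x0 mulr_gt0 ?expR_gt0 // exprn_gt0 // invr_gt0. Qed.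

Lemma flat_ge0 k x : 0 <= flat k x.
Proof. by case: (ltP 0 x) => x0; [exact/ltW/flat_gt0|rewrite flat_le0]. Qed.

Lemma flatS k x : 0 < x -> flat k.+1 x = x^-1 * flat k x.
Proof. by move=> x0; rewrite /flat x0 exprS mulrA. Qed.

Lemma flat_le_fact k x : flat k x <= k`!%:R.
Proof.
rewrite /flat; case: ifP => [x0|_]; last by rewrite ler0n.
set t := x^-1; have t0 : 0 < t by rewrite invr_gt0.
have tk : t ^+ k <= k`!%:R * expR t.
  case: k => [|k]; first by rewrite expr0 mul1r; have := expR_ge1Dx t; lra.
  have : t ^+ k.+1 / k.+1`!%:R <= expR t by have := expR_ge1Dxn k (ltW t0); lra.
  by rewrite ler_pdivrMr ?ltr0n ?fact_gt0 // mulrC.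
by rewrite expRN ler_pdivrMr ?expR_gt0.
Qed.

Lemma cvg_dnbhs0_linear_bound (q : R -> R) (C : R) : 0 < C ->
  (forall h, h != 0 -> `|q h| <= C * `|h|) -> q x @[x --> 0^'] --> 0.
Proof.
move=> C0 qC; apply/cvgr0Pnorm_lt => e e0.
near=> h.
have h0 : h != 0 by near: h; exact: withinT.
apply: le_lt_trans (qC h h0) _.
rewrite -ltr_pdivlMl // mulrC.
by near: h; apply: dnbhs0_lt; rewrite divr_gt0.
Unshelve. all: by end_near. Qed.

Lemma is_derive_flat0 k : is_derive (0 : R) 1 (flat k) 0.
Proof.
set q := fun h : R => h^-1 *: ((flat k \o shift 0) (h *: (1 : R)) - flat k 0).
have q0 : q x @[x --> 0^'] --> 0.
  apply: (@cvg_dnbhs0_linear_bound _ (k.+2)`!%:R); first by rewrite ltr0n fact_gt0.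
  move=> h h0; rewrite /q /= addr0 [flat k 0]flat_le0 // subr0 /GRing.scale /= mulr1.
  case: (ltP 0 h) => hp; last by rewrite flat_le0 // mulr0 normr0 mulr_ge0.
  rewrite -flatS // ger0_norm ?flat_ge0 // gtr0_norm // -[h in _ * h]invrK.
  by rewrite ler_pdivlMr ?invr_gt0 // mulrC -flatS // flat_le_fact.
by apply: DeriveDef; [apply/cvg_ex; exists 0; exact: q0|exact: cvg_lim q0].
Qed.

Lemma is_derive_flat k x :
  is_derive x 1 (flat k) (flat k.+2 x - k%:R * flat k.+1 x).
Proof.
case: (ltgtP x 0) => [x0|x0|->].
- rewrite !flat_le0 ?ltW // mulr0 subr0.
  apply: (@near_eq_is_derive _ _ _ (fun _ : R => 0 : R)).
  by near=> y; rewrite flat_le0 // ltW //; near: y; exact: lt_nbhsl.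
- apply: (@near_eq_is_derive _ _ _ (fun y : R => y^-1 ^+ k * expR (- y^-1))).
    by near=> y; rewrite /flat ifT //; near: y; exact: lt_nbhsr.
  have dV : is_derive x 1 (fun y => y^-1) (- 1 / x ^+ 2).
    by apply: (@is_derive1V _ (fun y => y)) => //; rewrite gt_eqF.
  apply: is_derive_eq (is_derive1M (is_derive1X k dV)
    (is_derive1_expR_comp (is_deriveN dV))) _.
  rewrite /flat x0 mulN1r -exprVn; set t := x^-1.
  case: k => [|k] /=; first by rewrite !expr0; ring.
  by rewrite opprK -!natr1 !exprS; ring.
- by rewrite !flat_le0 // mulr0 subr0; exact: is_derive_flat0.
Unshelve. all: by end_near. Qed.

Lemma smooth_flat k : smooth (flat k).
Proof.
apply/smoothP => n; elim: n k => [|n IH] k.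
  by split; first by move=> x; case: (is_derive_flat k x).
apply: (derivable_upto_is_derive (fun x => is_derive_flat k x)).
apply: derivable_uptoD; first exact: IH.
by apply: derivable_uptoN; apply: derivable_uptoM; [exact: derivable_upto_cst|exact: IH].
Qed.

End Flat.

Section Step.
Variable R : realType.
Implicit Types x y : R.

Definition step_den x : R := flat 0 (x - 8^-1) + flat 0 (3 / 8 - x).
Definition step x : R := flat 0 (x - 8^-1) / step_den x.
Definition dstep x : R :=
  (flat 2 (x - 8^-1) * flat 0 (3 / 8 - x) + flat 0 (x - 8^-1) * flat 2 (3 / 8 - x))
  / step_den x ^+ 2.

Lemma step_den_gt0 x : 0 < step_den x.
Proof.
have := flat_ge0 0 (x - 8^-1); have := flat_ge0 0 (3 / 8 - x).
rewrite /step_den; case: (ltP 8^-1 x) => x8.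
  by have := @flat_gt0 R 0 (x - 8^-1); lra.
by have := @flat_gt0 R 0 (3 / 8 - x); lra.
Qed.

Lemma step_den_neq0 x : step_den x != 0.
Proof. by rewrite gt_eqF ?step_den_gt0. Qed.

Lemma step_eq0 x : x <= 8^-1 -> step x = 0.
Proof. by move=> x8; rewrite /step flat_le0 ?mul0r // subr_le0. Qed.

Lemma step_eq1 x : 3 / 8 <= x -> step x = 1.
Proof.
move=> x38; rewrite /step /step_den [flat 0 (3 / 8 - x)]flat_le0 ?subr_le0 //.
by rewrite addr0 divff // gt_eqF // flat_gt0 // subr_gt0; lra.
Qed.

Lemma step_ge0 x : 0 <= step x.
Proof. by rewrite /step divr_ge0 ?flat_ge0 // ltW ?step_den_gt0. Qed.

Lemma step_le1 x : step x <= 1.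
Proof.
by rewrite /step ler_pdivrMr ?step_den_gt0 // mul1r /step_den lerDl flat_ge0.
Qed.

Lemma stepN x : step x + step (2^-1 - x) = 1.
Proof.
have e1 : 2^-1 - x - 8^-1 = 3 / 8 - x :> R by field.
have e2 : 3 / 8 - (2^-1 - x) = x - 8^-1 :> R by field.
have := step_den_neq0 x; rewrite /step /step_den e1 e2 => den0.
by field; rewrite addrC.
Qed.

Lemma is_derive_step x : is_derive x 1 step (dstep x).
Proof.
have du : is_derive x 1 (fun y => flat 0 (y - 8^-1)) (flat 2 (x - 8^-1)).
  apply: is_derive_eq
    (is_derive1_comp (is_derive_flat 0 _) (is_derive1_subr_cst 8^-1 x)) _.
  by rewrite mul0r !subr0 mulr1.
have dv : is_derive x 1 (fun y => flat 0 (3 / 8 - y)) (- flat 2 (3 / 8 - x)).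
  apply: is_derive_eq
    (is_derive1_comp (is_derive_flat 0 _) (is_derive1_cst_subr (3 / 8) x)) _.
  by rewrite mul0r subr0 mulrN1.
apply: is_derive_eq (is_derive1M du (is_derive1V (step_den_neq0 x)
  (is_deriveD du dv))) _.
by rewrite /dstep /step_den; field; exact: step_den_neq0.
Qed.

Lemma smooth_step : smooth step.
Proof.
have sl : smooth (fun x => flat 0 (x - 8^-1)).
  apply: (@smooth_comp _ (flat 0) (fun x => x - 8^-1)); first exact: smooth_flat.
  by apply: smoothD; [exact: smooth_id|exact: smooth_cst].
have sr : smooth (fun x => flat 0 (3 / 8 - x)).
  apply: (@smooth_comp _ (flat 0) (fun x => 3 / 8 - x)); first exact: smooth_flat.
  by apply: smoothD; [exact: smooth_cst|apply: smoothN; exact: smooth_id].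
exact: smoothM sl (smoothV step_den_neq0 (smoothD sl sr)).
Qed.

Lemma dstep_ge0 x : 0 <= dstep x.
Proof. by rewrite /dstep divr_ge0 ?sqr_ge0 // addr_ge0 // mulr_ge0 ?flat_ge0. Qed.

Lemma dstep_eq0 x : x <= 8^-1 \/ 3 / 8 <= x -> dstep x = 0.
Proof.
rewrite /dstep => -[x8|x38].
  by rewrite !(flat_le0 _ (x := x - 8^-1)) ?subr_le0 // !mul0r add0r mul0r.
by rewrite !(flat_le0 _ (x := 3 / 8 - x)) ?subr_le0 // !mulr0 addr0 mul0r.
Qed.

Lemma step_den_ge x : expR (- 8) <= step_den x.
Proof.
have flat_ge y : 8^-1 <= y -> expR (- 8) <= flat 0 y.
  move=> y8; have y0 : 0 < y by apply: lt_le_trans y8; rewrite invr_gt0.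
  rewrite /flat y0 expr0 mul1r ler_expR lerN2 -[8]invrK.
  by rewrite lef_pV2 ?posrE ?invr_gt0.
have := flat_ge0 0 (x - 8^-1); have := flat_ge0 0 (3 / 8 - x).
rewrite /step_den; case: (lerP 4^-1 x) => x4.
  by have := flat_ge (x - 8^-1); lra.
by have := flat_ge (3 / 8 - x); lra.
Qed.

Lemma dstep_le x : dstep x <= 2 * expR 8.
Proof.
have D0 := step_den_gt0 x; have D8 := step_den_ge x.
have num : flat 2 (x - 8^-1) * flat 0 (3 / 8 - x)
    + flat 0 (x - 8^-1) * flat 2 (3 / 8 - x) <= 2 * step_den x.
  have := flat_le_fact 2 (x - 8^-1); have := flat_le_fact 2 (3 / 8 - x).
  have := flat_ge0 0 (x - 8^-1); have := flat_ge0 0 (3 / 8 - x).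
  rewrite /step_den (_ : 2`!%:R = 2 :> R) //; nra.
have ds : dstep x <= 2 / step_den x.
  rewrite /dstep ler_pdivrMr ?exprn_gt0 //.
  by rewrite expr2 mulrA divfK ?gt_eqF.
apply: le_trans ds _; rewrite ler_pdivrMr // -mulrA -[2 in leLHS]mulr1 ler_pM2l //.
by rewrite -[leLHS](expRxMexpNx_1 8) ler_pM2l ?expR_gt0.
Qed.

Lemma continuous_step : continuous step.
Proof.
by move=> x; apply/differentiable_continuous/derivable1_diffP; case: (is_derive_step x).
Qed.

Definition ramp x : R :=
  \int[@lebesgue_measure R]_(t in [set` `[-1, x]]) step t.

Lemma ramp_eq0 x : x <= 8^-1 -> ramp x = 0.
Proof.
move=> x8; rewrite /ramp (@eq_Rintegral _ _ _ _ _ (fun => 0)).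
  by rewrite /Rintegral integral0.
move=> t; rewrite inE /= in_itv /= => /andP[_ tx].
exact/step_eq0/(le_trans tx).
Qed.

Lemma is_derive_ramp x : is_derive x 1 ramp (step x).
Proof.
case: (ltP x 8^-1) => x8.
  rewrite step_eq0 ?ltW //.
  apply: (@near_eq_is_derive _ _ _ (fun _ : R => 0 : R)).
  by near=> y; rewrite ramp_eq0 // ltW //; near: y; exact: lt_nbhsl.
have int_step : (@lebesgue_measure R).-integrable `[-1, x + 1] (EFin \o step).
  apply: continuous_compact_integrable; first exact: segment_compact.
  exact: continuous_subspaceT continuous_step.
have x1 : -1 < x by apply: lt_le_trans x8; lra.
have [dr dr_step] := continuous_FTC1_closed (ltr_pwDr ltr01 (lexx x)) int_step x1
  (@continuous_step x).
by apply: DeriveDef; [exact: dr|rewrite -derive1E; exact: dr_step].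
Unshelve. all: by end_near. Qed.

Lemma smooth_ramp : smooth ramp.
Proof. exact: smooth_is_derive is_derive_ramp smooth_step. Qed.

Lemma rampN x : ramp x - ramp (2^-1 - x) = x - 4^-1.
Proof.
pose h y := ramp y - ramp (2^-1 - y) - y.
have dh y : is_derive y 1 h 0.
  apply: is_derive_eq (is_deriveB (is_deriveB (is_derive_ramp y)
    (is_derive1_comp (is_derive_ramp _) (is_derive1_cst_subr 2^-1 y)))
    (is_derive_id y 1)) _.
  by have := stepN y; lra.
have := @is_derive_0_is_cst _ h x 4^-1 dh.
by rewrite /h (_ : 2^-1 - 4^-1 = 4^-1 :> R); [lra|field].
Qed.

Lemma ramp_id x : 3 / 8 <= x -> ramp x = x - 4^-1.
Proof. by move=> x38; rewrite -rampN [ramp (2^-1 - x)]ramp_eq0 ?subr0 //; lra. Qed.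

Lemma ramp_ge0 x : 0 <= ramp x.
Proof.
case: (lerP x 8^-1) => x8; first by rewrite ramp_eq0.
rewrite -(ramp_eq0 (lexx 8^-1)).
exact: ger0_is_derive_le is_derive_ramp step_ge0 (ltW x8).
Qed.

Lemma ler_subr_ramp x y : x <= y -> x - ramp x <= y - ramp y.
Proof.
apply: ger0_is_derive_le (fun z => is_deriveB (is_derive_id z 1) (is_derive_ramp z)) _.
by move=> z; rewrite subr_ge0 step_le1.
Qed.

Lemma ramp_le_id x : 0 <= x -> ramp x <= x.
Proof. by move/ler_subr_ramp; rewrite [ramp 0]ramp_eq0 ?invr_ge0 //; lra. Qed.

Lemma ramp_ge x : x - 4^-1 <= ramp x.
Proof.
case: (lerP (3 / 8) x) => x38; first by rewrite ramp_id.
by have := ler_subr_ramp (ltW x38); rewrite [ramp (3 / 8)]ramp_id //; lra.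
Qed.

End Step.

(* Diagonal entries of the Ricci tensor of dr^2 + a^2 s1^2 + b^2 (s2^2 + s3^2)
   in the frame (d/dr, X1, X2, X3), from a, b and a1 = a', a2 = a'', b1 = b',
   b2 = b'' at one point; the frame fields X2 and X3 share the last entry. *)
Definition berger_ricci (F : fieldType) (a b a1 a2 b1 b2 : F) (i : 'I_4) : F :=
  match nat_of_ord i with
  | 0%N => - a2 / a - 2 * b2 / b
  | 1%N => a ^+ 2 * (- a2 / a - 2 * a1 * b1 / (a * b) + 2 * a ^+ 2 / b ^+ 4)
  | _ => b ^+ 2 * (- b2 / b - a1 * b1 / (a * b) - b1 ^+ 2 / b ^+ 2
                   + (4 * b ^+ 2 - 2 * a ^+ 2) / b ^+ 4)
  end.

Section Ricci.
Variable R : realType.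
Implicit Types s t : R.
Variables rho phi a1 a2 b1 b2 : R -> R.
Let a s := rho s * phi s.
Hypothesis da : forall s, is_derive s 1 a (a1 s).
Hypothesis da1 : forall s, is_derive s 1 a1 (a2 s).
Hypothesis db : forall s, is_derive s 1 rho (b1 s).
Hypothesis db1 : forall s, is_derive s 1 b1 (b2 s).
Hypothesis a_neq0 : forall s, 0 < s -> a s != 0.
Hypothesis b_neq0 : forall s, 0 < s -> rho s != 0.

Definition frame_diag (F0 F1 F2 : R -> R) (i : 'I_4) (s : R) : R :=
  if nat_of_ord i == 0%N then F0 s else if nat_of_ord i == 1%N then F1 s else F2 s.

Let E := frame_diag (fun => 1) (fun s => a s ^+ 2) (fun s => rho s ^+ 2).
Let E1 := frame_diag (fun => 0) (fun s => 2 * a s * a1 s) (fun s => 2 * rho s * b1 s).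
Let E2 := frame_diag (fun => 0) (fun s => 2 * a1 s ^+ 2 + 2 * a s * a2 s)
  (fun s => 2 * b1 s ^+ 2 + 2 * rho s * b2 s).

Let is_derive_sqr_mul (f f1 f2 : R -> R) s :
  (forall t, is_derive t 1 f (f1 t)) -> (forall t, is_derive t 1 f1 (f2 t)) ->
  is_derive s 1 (fun t => 2 * f t * f1 t) (2 * f1 s ^+ 2 + 2 * f s * f2 s).
Proof.
move=> df df1.
apply: is_derive_eq (is_derive1M (is_derive1_cstM 2 (df s)) (df1 s)) _.
by ring.
Qed.

Lemma is_derive_frame_diag i s : is_derive s 1 (E i) (E1 i s).
Proof.
rewrite /E /E1 /frame_diag; case: ifP => _; first exact: is_derive_cst.
by case: ifP => _; exact: is_derive1_sqr.
Qed.

Lemma is_derive_frame_diag1 i s : is_derive s 1 (E1 i) (E2 i s).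
Proof.
rewrite /E1 /E2 /frame_diag; case: ifP => _; first exact: is_derive_cst.
by case: ifP => _; exact: is_derive_sqr_mul.
Qed.

Let G := g_rho_phi rho phi.

Lemma g_rho_phiE s i j : G s i j = if i == j then E i s else 0.
Proof. by rewrite /G /g_rho_phi mxE; case: eqP. Qed.

Lemma frame_diag_neq0 i s : 0 < s -> E i s != 0.
Proof.
move=> s0; rewrite /E /frame_diag; case: ifP => _; first exact: oner_neq0.
by case: ifP => _; rewrite sqrf_eq0; [exact: a_neq0|exact: b_neq0].
Qed.

Lemma invmx_g_rho_phi s : 0 < s ->
  invmx (G s) = \matrix_(i, j) if i == j then (E i s)^-1 else 0.
Proof.
move=> s0; set D := \matrix_(i, j) _.
have GD : G s *m D = 1%:M.
  apply/matrixP => i j; rewrite !mxE (bigD1 i) //= big1; last first.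
    by move=> k /negPf ki; rewrite g_rho_phiE eq_sym ki mul0r.
  rewrite g_rho_phiE eqxx !mxE addr0; case: eqP => [->|_]; last by rewrite mulr0.
  by rewrite divff // frame_diag_neq0.
have [Gu _] := mulmx1_unit GD.
by rewrite -[invmx _]mulmx1 -GD mulmxA mulVmx // mul1mx.
Qed.

Definition koszul_diag (F F1 : 'I_4 -> R -> R) (x y z : 'I_4) (s : R) : R :=
  ((if (nat_of_ord x == 0%N) && (y == z) then F1 y s else 0)
   + (if (nat_of_ord y == 0%N) && (x == z) then F1 x s else 0)
   - (if (nat_of_ord z == 0%N) && (x == y) then F1 x s else 0)
   + frameC R x y z * F z s - frameC R x z y * F y s - frameC R y z x * F x s) / 2.

Lemma koszulE x y z s : koszul G x y z s = koszul_diag E E1 x y z s.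
Proof.
have dG u v w : frameD u (fun t => G t v w) s =
    if (nat_of_ord u == 0%N) && (v == w) then E1 v s else 0.
  rewrite /frameD; case: ifP => _ //=.
  rewrite (_ : (fun t => G t v w) = fun t => if v == w then E v t else 0).
    by case: eqP => _; apply: is_derive1_derive1;
      by [exact: is_derive_frame_diag|exact: is_derive_cst].
  by apply/funext => t; rewrite g_rho_phiE.
have sumG u v w : \sum_(e < 4) frameC R u v e * G s e w = frameC R u v w * E w s.
  rewrite (bigD1 w) //= big1; last by move=> k /negPf kw; rewrite g_rho_phiE kw mulr0.
  by rewrite g_rho_phiE eqxx addr0.
by rewrite /koszul /koszul_diag !dG !sumG.
Qed.

Lemma christoffelE x y z s : 0 < s ->
  christoffel G x y z s = koszul_diag E E1 x y z s / E z s.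
Proof.
move=> s0; rewrite /christoffel invmx_g_rho_phi // (bigD1 z) //= big1; last first.
  by move=> k /negPf kz; rewrite mxE eq_sym kz mul0r.
by rewrite mxE eqxx koszulE addr0 mulrC.
Qed.

Lemma is_derive_koszul_diag x y z s :
  is_derive s 1 (koszul_diag E E1 x y z) (koszul_diag E1 E2 x y z s).
Proof.
have is_derive_if (b : bool) (F F' : R -> R) : (forall t, is_derive t 1 F (F' t)) ->
    is_derive s 1 (fun t => if b then F t else 0) (if b then F' s else 0).
  by case: b => dF; [exact: dF|exact: is_derive_cst].
apply: is_derive_eq.
  apply: (is_derive1M _ (is_derive_cst _ _ _)).
  eapply is_deriveB; [eapply is_deriveB; [eapply is_deriveD;
    [eapply is_deriveB; [eapply is_deriveD|]|]|]|].
  - exact: is_derive_if (is_derive_frame_diag1 _).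
  - exact: is_derive_if (is_derive_frame_diag1 _).
  - exact: is_derive_if (is_derive_frame_diag1 _).
  - exact: is_derive1_cstM (is_derive_frame_diag _ _).
  - exact: is_derive1_cstM (is_derive_frame_diag _ _).
  - exact: is_derive1_cstM (is_derive_frame_diag _ _).
by rewrite mulr0 addr0.
Qed.

Lemma derive1_christoffel x y z r : 0 < r ->
  derive1 (christoffel G x y z) r =
  (koszul_diag E1 E2 x y z r * E z r - koszul_diag E E1 x y z r * E1 z r) / E z r ^+ 2.
Proof.
move=> r0; apply: is_derive1_derive1.
apply: (@near_eq_is_derive _ _ _ (fun s => koszul_diag E E1 x y z s * (E z s)^-1)).
  by near=> s; rewrite christoffelE //; near: s; exact: lt_nbhsr.
apply: is_derive_eq (is_derive1M (is_derive_koszul_diag x y z r)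
  (is_derive1V (frame_diag_neq0 z r0) (is_derive_frame_diag z r))) _.
by field; exact: frame_diag_neq0.
Unshelve. all: by end_near. Qed.

Lemma ricci_g_rho_phi i j r : 0 < r -> ricci G i j r =
  if i == j then berger_ricci (a r) (rho r) (a1 r) (a2 r) (b1 r) (b2 r) i else 0.
Proof.
move=> r0; have a0 := a_neq0 r0; have b0 := b_neq0 r0.
case: i => [[|[|[|[|//]]]] hi]; case: j => [[|[|[|[|//]]]] hj];
rewrite /ricci /riemann !big_ord_recr !big_ord0 /= /frameD /=;
rewrite !derive1_christoffel // !christoffelE //;
rewrite /koszul_diag /E /E1 /E2 /frame_diag /frameC /berger_ricci /=;
by field; rewrite ?a0 ?b0.
Qed.

End Ricci.

Lemma ricci_nonneg_diag (R : realType) (G : R -> 'M[R]_4) (d : 'I_4 -> R -> R) :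
  (forall i j r, 0 < r -> ricci G i j r = if i == j then d i r else 0) ->
  (forall r, 0 < r -> forall i, 0 <= d i r) -> ricci_nonneg G.
Proof.
move=> ricE d_ge0 r r0 v; apply: sumr_ge0 => i _.
rewrite (bigD1 i) //= ricE // eqxx big1 ?addr0; last first.
  by move=> j /negPf ji; rewrite ricE // eq_sym ji !mul0r.
by rewrite -mulrA -expr2 mulr_ge0 ?sqr_ge0 ?d_ge0.
Qed.

(* [e], [a], [b], [s], [ds] stand for eps, rho phi, rho, step and step' at a
   point r > 0; the two cases of [regime] are r <= 1/8 and r > 1/8. *)
Section BergerRicciNonneg.
Variable R : realFieldType.
Variables e a b s ds : R.
Hypothesis e_gt0 : 0 < e.
Hypothesis e_small : e <= 200^-1.
Hypothesis a_gt0 : 0 < a.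
Hypothesis le_ab : a <= b.
Hypothesis b_ge1 : 1 <= b.
Hypothesis s_ge0 : 0 <= s.
Hypothesis s_le1 : s <= 1.
Hypothesis ds_ge0 : 0 <= ds.
Hypothesis regime :
  (s = 0 /\ ds = 0) \/ (2^-1 <= a /\ b <= a + 1 /\ e * ds * b <= 2^-1).

Let a1 := 4 - (4 - e) * s.
Let b1 := e * s.

Let b_gt0 : 0 < b. Proof. exact: lt_le_trans b_ge1. Qed.
Let a_ge0 : 0 <= a. Proof. exact: ltW. Qed.
Let b_ge0 : 0 <= b. Proof. exact: ltW. Qed.
Let e_ge0 : 0 <= e. Proof. exact: ltW. Qed.
Let c_ge0 : 0 <= 4 - e. Proof. by move: e_small; lra. Qed.
Let a1_ge0 : 0 <= a1.
Proof. by move: e_small s_le1 (mulr_ge0 s_ge0 (ltW e_gt0)); rewrite /a1; nra. Qed.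
Let a1_le4 : a1 <= 4.
Proof. by move: e_small s_ge0 (mulr_ge0 s_ge0 (ltW e_gt0)); rewrite /a1; nra. Qed.
Let b1_ge0 : 0 <= b1. Proof. exact: mulr_ge0. Qed.
Let b1_le : b1 <= e. Proof. by rewrite /b1 ler_piMr. Qed.

Let ricci0_ge0 : 0 <= - (- (4 - e) * ds) / a - 2 * (e * ds) / b.
Proof.
have -> : - (- (4 - e) * ds) / a - 2 * (e * ds) / b
    = ds * ((4 - e) * b - 2 * e * a) / (a * b).
  by field; rewrite !gt_eqF.
apply: divr_ge0; last exact: mulr_ge0.
apply: mulr_ge0 => //; rewrite subr_ge0.
apply: le_trans (_ : 2 * e * b <= _); first by rewrite ler_pM2l ?mulr_gt0.
by rewrite ler_pM2r //; move: e_small; lra.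
Qed.

Let b_le_3a : s != 0 -> b <= 3 * a.
Proof. by case: regime => [[-> _]|[a2 [ba _]] _]; [rewrite eqxx|lra]. Qed.

Let ricci1_ge0 :
  0 <= a ^+ 2 * (- (- (4 - e) * ds) / a - 2 * a1 * b1 / (a * b) + 2 * a ^+ 2 / b ^+ 4).
Proof.
have -> : a ^+ 2 * (- (- (4 - e) * ds) / a - 2 * a1 * b1 / (a * b) + 2 * a ^+ 2 / b ^+ 4)
    = ((4 - e) * ds * a * b ^+ 4 + 2 * a * (a ^+ 3 - a1 * b1 * b ^+ 3)) / b ^+ 4.
  by field; rewrite !gt_eqF.
apply: divr_ge0; last exact: exprn_ge0.
apply: addr_ge0; first by rewrite !mulr_ge0 ?exprn_ge0.
rewrite !mulr_ge0 // subr_ge0.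
have [s0|s0] := eqVneq s 0; first by rewrite /b1 s0 mulr0 mulr0 mul0r exprn_ge0.
have b3 : b ^+ 3 <= (3 * a) ^+ 3 by rewrite lerXn2r ?nnegrE ?b_le_3a // mulr_ge0.
have a1b1 : a1 * b1 <= 4 * e by exact: ler_pM.
apply: le_trans (_ : 4 * e * (3 * a) ^+ 3 <= _).
  by apply: ler_pM => //; rewrite ?mulr_ge0 // exprn_ge0 // mulr_ge0.
rewrite exprMn mulrA ler_piMl ?exprn_ge0 // !exprS expr0 mulr1.
by move: e_small; lra.
Qed.

Let ricci2_ge0 : 0 <= b ^+ 2 * (- (e * ds) / b - a1 * b1 / (a * b) - b1 ^+ 2 / b ^+ 2
                                 + (4 * b ^+ 2 - 2 * a ^+ 2) / b ^+ 4).
Proof.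
have -> : b ^+ 2 * (- (e * ds) / b - a1 * b1 / (a * b) - b1 ^+ 2 / b ^+ 2
                    + (4 * b ^+ 2 - 2 * a ^+ 2) / b ^+ 4)
    = (b ^+ 2 * (2 * a - e * ds * a * b - a1 * b1 * b - b1 ^+ 2 * a)
       + 2 * a * ((b - a) * (b + a))) / (a * b ^+ 2).
  by field; rewrite !gt_eqF.
apply: divr_ge0; last by rewrite mulr_ge0 ?exprn_ge0.
apply: addr_ge0; last by rewrite !mulr_ge0 // ?subr_ge0 // addr_ge0.
apply: mulr_ge0; first exact: exprn_ge0.
case: regime => [[s0 ds0]|[a2 [ba eb]]].
  by rewrite /b1 s0 ds0 !(mulr0, mul0r, expr0n, subr0) mulr_ge0.
have t1 : e * ds * a * b <= 2^-1 * a.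
  by rewrite mulrAC ler_wpM2r.
have t2 : a1 * b1 * b <= 4 * e * (3 * a).
  by apply: ler_pM; [exact: mulr_ge0|done|exact: ler_pM|lra].
have t3 : b1 ^+ 2 * a <= e * a.
  rewrite ler_wpM2r // expr2; apply: le_trans (_ : e * e <= e).
    exact: ler_pM.
  by rewrite ler_piMl //; move: e_small; lra.
by move: e_small; nra.
Qed.

Lemma berger_ricci_ge0 i :
  0 <= berger_ricci a b (4 - (4 - e) * s) (- (4 - e) * ds) (e * s) (e * ds) i.
Proof. by case: i => [[|[|i]] ?]; [exact: ricci0_ge0|exact: ricci1_ge0|exact: ricci2_ge0]. Qed.

End BergerRicciNonneg.

Section Construction.
Variable R : realType.
Implicit Types r s t y : R.

Definition eps : R := expR (- 100).
Definition rho r : R := 1 + eps * ramp r.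
Definition rhophi r : R := 4 * r - (4 - eps) * ramp r.
Definition phi r : R := rhophi r / rho r.

Lemma eps_gt0 : 0 < eps. Proof. exact: expR_gt0. Qed.

Lemma eps_le : eps <= 200^-1.
Proof.
rewrite /eps expRN lef_pV2 ?posrE ?expR_gt0 //.
apply: le_trans (expR_ge1Dxn 1 (_ : 0 <= 100)) => //.
by rewrite (_ : 2`!%:R = 2 :> R) //; lra.
Qed.

Lemma eps_expR8_le : eps * expR 8 <= 8^-1.
Proof.
rewrite /eps -expRD (_ : - 100 + 8 = - 92 :> R); last by lra.
rewrite expRN lef_pV2 ?posrE ?expR_gt0 //.
by apply: le_trans (expR_ge1Dx _); lra.
Qed.

Lemma rho_ge1 r : 1 <= rho r.
Proof. by rewrite lerDl mulr_ge0 ?ramp_ge0 // ltW ?eps_gt0. Qed.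

Lemma rho_gt0 r : 0 < rho r.
Proof. exact: lt_le_trans (rho_ge1 r). Qed.

Lemma rhophiE r : rho r * phi r = rhophi r.
Proof. by rewrite /phi mulrC divfK // gt_eqF ?rho_gt0. Qed.

Lemma is_derive_rho r : is_derive r 1 rho (eps * step r).
Proof.
apply: is_derive_eq (is_derive1D (f := fun => 1) (is_derive_cst (1 : R) r 1)
  (is_derive1_cstM eps (is_derive_ramp r))) _.
by rewrite add0r.
Qed.

Lemma is_derive_rhophi r : is_derive r 1 rhophi (4 - (4 - eps) * step r).
Proof.
apply: is_derive_eq (is_derive1B (is_derive1_cstM 4 (is_derive_id r 1))
  (is_derive1_cstM (4 - eps) (is_derive_ramp r))) _.
by rewrite mulr1.
Qed.

Lemma is_derive_drho r : is_derive r 1 (fun y => eps * step y) (eps * dstep r).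
Proof. exact: is_derive1_cstM (is_derive_step r). Qed.

Lemma is_derive_drhophi r :
  is_derive r 1 (fun y => 4 - (4 - eps) * step y) (- (4 - eps) * dstep r).
Proof.
apply: is_derive_eq (is_derive1B (f := fun => 4) (is_derive_cst (4 : R) r 1)
  (is_derive1_cstM (4 - eps) (is_derive_step r))) _.
by rewrite sub0r mulNr.
Qed.

Lemma eps_le_drhophi r : eps <= 4 - (4 - eps) * step r.
Proof.
rewrite -subr_ge0 (_ : _ - eps = (4 - eps) * (1 - step r)); last by ring.
by rewrite mulr_ge0 ?subr_ge0 ?step_le1 //; have := eps_le; lra.
Qed.

Lemma eps_le_rhophi r : 0 <= r -> eps * r <= rhophi r.
Proof.
move=> r0.
have d y : is_derive y 1 (fun y => rhophi y - eps * y) (4 - (4 - eps) * step y - eps).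
  apply: is_derive_eq (is_derive1B (is_derive_rhophi y)
    (is_derive1_cstM eps (is_derive_id y 1))) _.
  by rewrite mulr1.
have f'_ge0 y : 0 <= 4 - (4 - eps) * step y - eps by rewrite subr_ge0 eps_le_drhophi.
have := ger0_is_derive_le d f'_ge0 r0.
by rewrite /rhophi [ramp 0]ramp_eq0 ?invr_ge0 //; lra.
Qed.

Lemma rhophi_gt0 r : 0 < r -> 0 < rhophi r.
Proof.
move=> r0; apply: lt_le_trans (eps_le_rhophi (ltW r0)).
by rewrite mulr_gt0 ?eps_gt0.
Qed.

Lemma phi_ge0 r : 0 <= r -> 0 <= phi r.
Proof.
move=> r0; apply: divr_ge0; last exact/ltW/rho_gt0.
by apply: le_trans (eps_le_rhophi r0); rewrite mulr_ge0 // ltW ?eps_gt0.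
Qed.

Lemma phi_gt0 r : 0 < r -> 0 < phi r.
Proof. by move=> r0; rewrite divr_gt0 ?rhophi_gt0 ?rho_gt0. Qed.

Lemma rhophi_le_rho r : rhophi r <= rho r.
Proof. by have := ramp_ge r; rewrite /rhophi /rho; lra. Qed.

Lemma rho_le_rhophiD1 r : 0 <= r -> rho r <= rhophi r + 1.
Proof. by move/ramp_le_id; rewrite /rhophi /rho; lra. Qed.

Lemma rhophi_ge_half r : 8^-1 <= r -> 2^-1 <= rhophi r.
Proof.
move=> r8; have drhophi_ge0 y : 0 <= 4 - (4 - eps) * step y.
  exact/(le_trans _ (eps_le_drhophi y))/ltW/eps_gt0.
have := ger0_is_derive_le is_derive_rhophi drhophi_ge0 r8.
by rewrite /rhophi [ramp 8^-1]ramp_eq0 // mulr0 subr0 (_ : 4 * 8^-1 = 2^-1 :> R) //; field.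
Qed.

Lemma eps_dstep_rho_le r : 0 <= r -> eps * dstep r * rho r <= 2^-1.
Proof.
move=> r0; case: (lerP (3 / 8) r) => r38.
  by rewrite dstep_eq0 ?mulr0 ?mul0r //; right.
have rho2 : rho r <= 2.
  by have := ramp_le_id r0; have := eps_le; have := ramp_ge0 r; rewrite /rho; nra.
have eds : eps * dstep r <= 4^-1.
  apply: le_trans (_ : eps * (2 * expR 8) <= _).
    by rewrite ler_wpM2l ?dstep_le // ltW ?eps_gt0.
  by rewrite mulrCA; have := eps_expR8_le; lra.
have := rho_ge1 r; have : 0 <= eps * dstep r by rewrite mulr_ge0 ?dstep_ge0 // ltW ?eps_gt0.
nra.
Qed.

Lemma smooth_rho : smooth rho.
Proof.
by apply: smoothD; [exact: smooth_cst|apply: smoothM; [exact: smooth_cst|exact: smooth_ramp]].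
Qed.

Lemma smooth_rhophi : smooth rhophi.
Proof.
apply: smoothD; first by apply: smoothM; [exact: smooth_cst|exact: smooth_id].
by apply: smoothN; apply: smoothM; [exact: smooth_cst|exact: smooth_ramp].
Qed.

Lemma smooth_phi : smooth phi.
Proof.
apply: smoothM; first exact: smooth_rhophi.
by apply: smoothV; [move=> r; rewrite gt_eqF ?rho_gt0|exact: smooth_rho].
Qed.

Lemma ricci_nonneg_g_rho_phi : ricci_nonneg (g_rho_phi rho phi).
Proof.
have da s : is_derive s 1 (fun t => rho t * phi t) (4 - (4 - eps) * step s).
  by apply: near_eq_is_derive (is_derive_rhophi s); near=> t; rewrite rhophiE.
have a_neq0 s : 0 < s -> rho s * phi s != 0.
  by move=> s0; rewrite rhophiE gt_eqF ?rhophi_gt0.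
have b_neq0 s : 0 < s -> rho s != 0 by rewrite gt_eqF ?rho_gt0.
apply: (ricci_nonneg_diag (ricci_g_rho_phi da is_derive_drhophi is_derive_rho
  is_derive_drho a_neq0 b_neq0)) => r r0 i.
rewrite rhophiE; apply: (berger_ricci_ge0 eps_gt0 eps_le (rhophi_gt0 r0)
  (rhophi_le_rho r) (rho_ge1 r) (step_ge0 r) (step_le1 r) (dstep_ge0 r)).
case: (lerP r 8^-1) => r8; [left|right].
  by rewrite step_eq0 ?dstep_eq0 //; left.
split; first exact/rhophi_ge_half/ltW.
by split; [exact/rho_le_rhophiD1/ltW|exact/eps_dstep_rho_le/ltW].
Unshelve. all: by end_near. Qed.

Lemma rho_eq1 y : y <= 8^-1 -> rho y = 1.
Proof. by move=> y8; rewrite /rho ramp_eq0 // mulr0 addr0. Qed.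

Lemma rhophi_eq y : y <= 8^-1 -> rhophi y = 4 * y.
Proof. by move=> y8; rewrite /rhophi ramp_eq0 // mulr0 subr0. Qed.

Lemma phi_eq y : y <= 8^-1 -> phi y = 4 * y.
Proof. by move=> y8; rewrite /phi rhophi_eq // rho_eq1 // divr1. Qed.

Let zero_lt8 : 0 < 8^-1 :> R. Proof. by rewrite invr_gt0. Qed.

Lemma derive1n_rho0 k : derive1n k.+1 rho 0 = 0.
Proof.
rewrite (derive1n_eq_lt (g := fun => 1) (c := 8^-1)) ?derive1n_cst //.
by move=> y /ltW; exact: rho_eq1.
Qed.

Lemma derive1_phi0 : derive1 phi 0 = 4.
Proof.
rewrite -derive1n1 (derive1n_eq_lt (g := fun y => 4 * y) (c := 8^-1)) //.
  by rewrite derive1n1 derive1_scale.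
by move=> y /ltW; exact: phi_eq.
Qed.

Lemma derive1n_even_rhophi0 k : derive1n k.*2 (fun r => rho r * phi r) 0 = 0.
Proof.
rewrite (derive1n_eq_lt (g := fun y => 4 * y) (c := 8^-1)) //; last first.
  by move=> y /ltW y8; rewrite rhophiE rhophi_eq.
case: k => [|k]; first by rewrite derive1n0 mulr0.
by rewrite doubleS derive1Sn derive1_scale derive1n_cst.
Qed.

Lemma derive1_rho_far r : 3 / 8 <= r -> derive1 rho r = eps.
Proof. by move=> r38; rewrite (is_derive1_derive1 (is_derive_rho r)) step_eq1 ?mulr1. Qed.

Lemma phi_far r : 3 / 8 <= r -> phi r = 1.
Proof.
move=> r38; rewrite /phi (_ : rhophi r = rho r) ?divff ?gt_eqF ?rho_gt0 //.
by rewrite /rhophi /rho ramp_id //; field.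
Qed.

End Construction.

Unset Implicit Arguments. Set Strict Implicit.

Theorem proposition2p2 (R : realType) :
  exists rho phi : R -> R,
    (smooth rho /\ smooth phi) /\
    (forall r : R, 0 <= r -> 0 <= rho r /\ 0 <= phi r) /\
    (forall r : R, 0 < r -> 0 < rho r /\ 0 < phi r) /\
    (rho 0 = 1 /\ (forall k : nat, derive1n k.*2.+1 rho 0 = 0)) /\
    (phi 0 = 0 /\ derive1 phi 0 = 4 /\
     (forall k : nat, derive1n k.*2 (fun r => rho r * phi r) 0 = 0)) /\
    (forall r : R, 2 <= r -> derive1 rho r = expR (- 100)) /\
    (forall r : R, 2 <= r -> phi r = 1) /\
    ricci_nonneg (g_rho_phi rho phi).
Proof.
have far (r : R) : 2 <= r -> 3 / 8 <= r by apply: le_trans; lra.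
exists (@rho R), (@phi R).
split; first by split; [exact: smooth_rho|exact: smooth_phi].
split; first by move=> r r0; split; [exact/ltW/rho_gt0|exact: phi_ge0].
split; first by move=> r r0; split; [exact: rho_gt0|exact: phi_gt0].
split; first by split; [rewrite rho_eq1 ?invr_ge0|move=> k; exact: derive1n_rho0].
split.
  split; first by rewrite phi_eq ?invr_ge0 // mulr0.
  by split; [exact: derive1_phi0|exact: derive1n_even_rhophi0].
split; first by move=> r /far; exact: derive1_rho_far.
split; first by move=> r /far; exact: phi_far.
exact: ricci_nonneg_g_rho_phi.
Qed.
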